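(* Let $x_1 \in X$ and stepsizes $\gamma_k > 0$ be given, and for $k \ge 1$ let \[ y_k = P_{x_k}(\gamma_k F(x_k)), \qquad x_{k+1} = P_{x_k}(\gamma_k F(y_k)). \] Then: (a) There exists $x^* \in X^*$ such that \[ -\frac{\gamma_k^2}{2\alpha}\|F(x_k) - F(y_k)\|_*^2 + V(x_k, y_k) \le V(x_k, x^* ) - V(x_{k+1}, x^* ). \] (b) If $F$ is Hölder continuous, i.e. $\|F(x) - F(y)\|_* \le L\|x-y\|^\nu$ for all $x, y\in X$ for some $L>0$ and $\nu \in (0,1]$, then there exists $x^* \in X^*$ such that \[ V(x_k,y_k) - 2^{\nu-1}L^2\gamma_k^2\alpha^{-(1+\nu)}\left[V(x_k,y_k)\right]^\nu \le V(x_k,x^* ) - V(x_{k+1},x^* ). \] In particular, if $F$ is Lipschitz continuous ($\nu = 1$), then \[ \left(1 - L^2\gamma_k^2\alpha^{-2}\right)V(x_k,y_k) \le V(x_k,x^* ) - V(x_{k+1},x^* ). \]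
   Context: $\mathbb{R}^n$ carries an inner product $\langle\cdot,\cdot\rangle$ and a norm $\|\cdot\|$ (not necessarily induced by the inner product), with dual norm $\|\cdot\|_*$. $X \subseteq \mathbb{R}^n$ is a nonempty closed convex set and $F: X \to \mathbb{R}^n$ is continuous. $X^*$ is the set of strong solutions of $\mathrm{VI}(X,F)$ (points $x^*\in X$ with $\langle F(x^* ), x - x^*\rangle \ge 0$ for all $x\in X$); it is assumed nonempty, and it is assumed (generalized monotonicity) that for every $x^* \in X^*$, $\langle F(x), x - x^*\rangle \ge 0$ for all $x \in X$. A distance generating function with modulus $\alpha>0$ w.r.t. $\|\cdot\|$ is a function $\omega: X \to \mathbb{R}$ that is convex and continuous on $X$, such that $X^o = \{x \in X : \partial\omega(x) \neq \emptyset\}$ is convex, and such that $\omega$ restricted to $X^o$ is continuously differentiable and satisfies $\langle \nabla\omega(x') - \nabla\omega(x), x' - x\rangle \ge \alpha\|x'-x\|^2$ for all $x, x' \in X^o$. Fix such an $\omega$. $V(x,z) = \omega(z) - \omega(x) - \langle \nabla\omega(x), z - x\rangle$ and $P_x(\phi) = \arg\min_{z \in X}\{\langle \phi, z\rangle + V(x,z)\}$. *)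

From HB Require Import structures.
From mathcomp Require Import all_boot all_order all_algebra.
From mathcomp Require Import all_classical all_reals all_analysis.
Set Implicit Arguments. Unset Strict Implicit. Unset Printing Implicit Defensive.
Import Order.TTheory GRing.Theory Num.Theory.
Local Open Scope ring_scope.
Local Open Scope classical_set_scope.

Section Defs.
Variables (R : realType) (n : nat).
Local Notation vec := 'rV[R]_n.

Definition is_inner_product (ip : vec -> vec -> R) : Prop :=
  (forall x y, ip x y = ip y x) /\
  (forall a x y z, ip (a *: x + y) z = a * ip x z + ip y z) /\
  (forall x, x != 0 -> 0 < ip x x).

Definition is_norm (N : vec -> R) : Prop :=
  (forall x, N x = 0 -> x = 0) /\
  (forall a x, N (a *: x) = `|a| * N x) /\
  (forall x y, N (x + y) <= N x + N y).

Definition dual_norm (ip : vec -> vec -> R) (N : vec -> R) (g : vec) : R :=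
  sup [set ip g x | x in [set x | N x <= 1]].

Definition convex_in (X : set vec) : Prop :=
  forall x y t, X x -> X y -> 0 <= t <= 1 -> X (t *: x + (1 - t) *: y).

(* closedness w.r.t. the norm N (all norms on R^n are equivalent) *)
Definition closed_set (N : vec -> R) (X : set vec) : Prop :=
  forall x, (forall e, 0 < e -> exists y, X y /\ N (y - x) < e) -> X x.

Definition cont_on (N : vec -> R) (A : set vec) (f : vec -> vec) : Prop :=
  forall x, A x -> forall e, 0 < e -> exists d, 0 < d /\
    forall y, A y -> N (y - x) < d -> N (f y - f x) < e.

Definition contR_on (N : vec -> R) (A : set vec) (f : vec -> R) : Prop :=
  forall x, A x -> forall e, 0 < e -> exists d, 0 < d /\
    forall y, A y -> N (y - x) < d -> `|f y - f x| < e.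

Definition convex_fun (X : set vec) (w : vec -> R) : Prop :=
  forall x y t, X x -> X y -> 0 <= t <= 1 ->
    w (t *: x + (1 - t) *: y) <= t * w x + (1 - t) * w y.

Definition subgrad (ip : vec -> vec -> R) (X : set vec) (w : vec -> R)
  (x g : vec) : Prop :=
  forall z, X z -> w x + ip g (z - x) <= w z.

Definition Xo (ip : vec -> vec -> R) (X : set vec) (w : vec -> R) : set vec :=
  [set x | X x /\ exists g, subgrad ip X w x g].

Definition grad_on (ip : vec -> vec -> R) (N : vec -> R) (A : set vec)
  (w : vec -> R) (gw : vec -> vec) : Prop :=
  forall x, A x -> forall e, 0 < e -> exists d, 0 < d /\
    forall y, A y -> N (y - x) < d ->
      `|w y - w x - ip (gw x) (y - x)| <= e * N (y - x).

Definition dgf (ip : vec -> vec -> R) (N : vec -> R) (X : set vec)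
  (alpha : R) (w : vec -> R) (gw : vec -> vec) : Prop :=
  0 < alpha /\ convex_fun X w /\ contR_on N X w /\
      convex_in (Xo ip X w) /\
      cont_on N (Xo ip X w) gw /\ grad_on ip N (Xo ip X w) w gw /\
      forall x x', Xo ip X w x -> Xo ip X w x' ->
        alpha * N (x' - x) ^+ 2 <= ip (gw x' - gw x) (x' - x).

Definition Breg (ip : vec -> vec -> R) (w : vec -> R) (gw : vec -> vec)
  (x z : vec) : R :=
  w z - w x - ip (gw x) (z - x).

Definition is_prox (ip : vec -> vec -> R) (X : set vec) (w : vec -> R)
  (gw : vec -> vec) (x phi p : vec) : Prop :=
  X p /\ forall z, X z ->
    ip phi p + Breg ip w gw x p <= ip phi z + Breg ip w gw x z.

Definition vi_sol (ip : vec -> vec -> R) (X : set vec) (F : vec -> vec)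
  (xs : vec) : Prop :=
  X xs /\ forall z, X z -> 0 <= ip (F xs) (z - xs).

End Defs.

(* The prox point p = P_x(phi) satisfies the three-point inequality
   <phi, p - z> <= V(x,z) - V(p,z) - V(x,p) for every z in X, a restatement of
   the first-order optimality condition of the prox problem.  For a solution
   xs, apply it to x_{k+1} with z = xs and to y_k with z = x_{k+1}, add, and use
   <F(y_k), y_k - xs> >= 0 and V(y_k, x_{k+1}) >= (alpha/2) r^2 with
   r = ||x_{k+1} - y_k||.  This gives
   V(x_k,y_k) + (alpha/2) r^2 - gamma_k ||F(x_k) - F(y_k)||_dual r
     <= V(x_k,xs) - V(x_{k+1},xs),
   and minimising the left-hand side over r yields (a).  For (b) one bounds
   ||F(x_k) - F(y_k)||_dual by L ||x_k - y_k||^nu and ||x_k - y_k||^2 by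
   (2/alpha) V(x_k,y_k). *)

From HB Require Import structures.
From mathcomp Require Import all_boot all_order all_algebra.
From mathcomp Require Import all_classical all_reals all_analysis.
From mathcomp Require Import ring lra.
Import Order.TTheory GRing.Theory Num.Theory numFieldNormedType.Exports.
Set Implicit Arguments. Unset Strict Implicit. Unset Printing Implicit Defensive.
Local Open Scope ring_scope.
Local Open Scope classical_set_scope.

Section InnerProduct.
Variables (R : realType) (n : nat) (ip : 'rV[R]_n -> 'rV[R]_n -> R).
Hypothesis hip : is_inner_product ip.

Lemma ipC x y : ip x y = ip y x.
Proof. by case: hip. Qed.

Lemma ip0l z : ip 0 z = 0.
Proof.
case: hip => _ [/(_ 1 0 0 z)]; rewrite scaler0 addr0 mul1r => h _; lra.
Qed.

Lemma ipDl x y z : ip (x + y) z = ip x z + ip y z.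
Proof. by case: hip => _ [/(_ 1 x y z)]; rewrite scale1r mul1r. Qed.

Lemma ipZl a x z : ip (a *: x) z = a * ip x z.
Proof. by case: hip => _ [/(_ a x 0 z)]; rewrite addr0 ip0l addr0. Qed.

Lemma ipNl x z : ip (- x) z = - ip x z.
Proof. by rewrite -scaleN1r ipZl mulN1r. Qed.

Lemma ipBl x y z : ip (x - y) z = ip x z - ip y z.
Proof. by rewrite ipDl ipNl. Qed.

Lemma ip0r z : ip z 0 = 0.
Proof. by rewrite ipC ip0l. Qed.

Lemma ipDr x y z : ip z (x + y) = ip z x + ip z y.
Proof. by rewrite ipC ipDl !(ipC z). Qed.

Lemma ipZr a x z : ip z (a *: x) = a * ip z x.
Proof. by rewrite ipC ipZl ipC. Qed.

Lemma ipNr x z : ip z (- x) = - ip z x.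
Proof. by rewrite ipC ipNl ipC. Qed.

Lemma ipBr x y z : ip z (x - y) = ip z x - ip z y.
Proof. by rewrite ipDr ipNr. Qed.

Lemma ip_gt0 x : x != 0 -> 0 < ip x x.
Proof. by case: hip => _ [_]; apply. Qed.

Lemma ip_ge0 x : 0 <= ip x x.
Proof. by have [->|/ip_gt0/ltW//] := eqVneq x 0; rewrite ip0l. Qed.

Lemma cauchy_schwarz a b : ip a b ^+ 2 <= ip a a * ip b b.
Proof.
have [->|/ip_gt0 b0] := eqVneq b 0; first by rewrite !ip0r expr0n /= mulr0.
have := ip_ge0 (a - (ip a b / ip b b) *: b).
rewrite !ipBl !ipBr !ipZl !ipZr (ipC b a).
have -> : ip a a - ip a b / ip b b * ip a b -
      (ip a b / ip b b * ip a b - ip a b / ip b b * (ip a b / ip b b * ip b b))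
      = ip a a - ip a b ^+ 2 / ip b b.
  by field; rewrite gt_eqF.
by rewrite subr_ge0 ler_pdivrMr.
Qed.

Definition enorm x := Num.sqrt (ip x x).

Lemma enorm_ge0 x : 0 <= enorm x.
Proof. exact: sqrtr_ge0. Qed.

Lemma enorm_sqr x : enorm x ^+ 2 = ip x x.
Proof. by rewrite sqr_sqrtr // ip_ge0. Qed.

Lemma enorm_sqrDZ a b t :
  enorm (a + t *: b) ^+ 2 = enorm a ^+ 2 + 2 * t * ip a b + t ^+ 2 * enorm b ^+ 2.
Proof. by rewrite !enorm_sqr ipDl !ipDr !ipZl !ipZr (ipC b a); ring. Qed.

Lemma ip_le_enorm a b : ip a b <= enorm a * enorm b.
Proof.
apply: le_trans (ler_norm _) _.
rewrite -ler_sqr ?nnegrE ?mulr_ge0 ?enorm_ge0 //.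
by rewrite real_normK ?num_real // exprMn !enorm_sqr cauchy_schwarz.
Qed.

Lemma ip_ge_Nenorm a b : - (enorm a * enorm b) <= ip a b.
Proof.
rewrite lerNl -ipNl; apply: le_trans (ip_le_enorm _ _) _.
by rewrite /enorm ipNl ipNr opprK.
Qed.

Lemma enorm_triangle x y : enorm (x + y) <= enorm x + enorm y.
Proof.
rewrite -ler_sqr ?nnegrE ?addr_ge0 ?enorm_ge0 //.
rewrite enorm_sqr sqrrD !enorm_sqr ipDl !ipDr (ipC y x).
have := ip_le_enorm x y; lra.
Qed.

Lemma enorm_is_norm : is_norm enorm.
Proof.
split; last split.
- move=> x /(congr1 (fun r => r ^+ 2)); rewrite enorm_sqr expr0n /= => h.
  by apply/eqP; apply: contraT => /ip_gt0; rewrite h ltxx.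
- by move=> a x; rewrite /enorm ipZl ipZr mulrA -expr2 sqrtrM ?sqr_ge0 // sqrtr_sqr.
- exact: enorm_triangle.
Qed.

End InnerProduct.

Lemma within_continuous_eps (R : realType) n (f : 'rV[R]_n -> R) (A : set 'rV[R]_n) :
  (forall x, A x -> forall e, 0 < e -> exists2 d, 0 < d &
     forall y, A y -> `|y - x| < d -> `|f y - f x| < e) ->
  {within A, continuous f}.
Proof.
move=> hf; apply/(@subspace_continuousP _ A _ f) => x Ax.
apply/cvgrPdist_lt => e /(hf x Ax)[d d0 hd].
rewrite near_withinE; near=> y => Ay.
rewrite distrC; apply: (hd y Ay).
near: y; rewrite !near_simpl; apply/nbhs_normP; exists d => //= z.
by rewrite /ball_ /= distrC.
Unshelve. all: end_near.
Qed.

(* MathComp-Analysis topologises 'rV through the sup norm `|u|; an arbitrary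
   norm is compared with it to transfer closedness, continuity and
   compactness. *)
Section Norm.
Variables (R : realType) (n : nat) (P : 'rV[R]_n -> R).
Hypothesis hP : is_norm P.

Lemma nrm_eq0 u : P u = 0 -> u = 0.
Proof. by case: hP => + _; apply. Qed.

Lemma nrmZ a u : P (a *: u) = `|a| * P u.
Proof. by case: hP => _ []. Qed.

Lemma nrm_triangle u v : P (u + v) <= P u + P v.
Proof. by case: hP => _ []. Qed.

Lemma nrm0 : P 0 = 0.
Proof. by rewrite -(scale0r 0) nrmZ normr0 mul0r. Qed.

Lemma nrmN u : P (- u) = P u.
Proof. by rewrite -scaleN1r nrmZ normrN normr1 mul1r. Qed.

Lemma nrm_ge0 u : 0 <= P u.
Proof. by have := nrm_triangle u (- u); rewrite subrr nrm0 nrmN => h; lra. Qed.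

Lemma nrm_gt0 u : u != 0 -> 0 < P u.
Proof. by move=> u0; rewrite lt0r nrm_ge0 andbT; apply: contra u0 => /eqP/nrm_eq0->. Qed.

Lemma nrm_distC u v : P (u - v) = P (v - u).
Proof. by rewrite -nrmN opprB. Qed.

Lemma nrm_dist_dist u v : `|P u - P v| <= P (u - v).
Proof.
rewrite ler_norml; apply/andP; split.
  by have := nrm_triangle (v - u) u; rewrite subrK nrm_distC => h; lra.
by have := nrm_triangle (u - v) v; rewrite subrK => h; lra.
Qed.

Lemma nrm_le_mxnorm : exists2 C, 0 <= C & forall u, P u <= C * `|u|.
Proof.
exists (\sum_(j < n) P (delta_mx 0 j)) => [|u].
  by apply: sumr_ge0 => j _; exact: nrm_ge0.
rewrite {1}(row_sum_delta u) mulr_suml.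
elim/big_rec2: _ => [|j a b _ hb]; first by rewrite nrm0.
apply: le_trans (nrm_triangle _ _) _; rewrite mulrC nrmZ lerD //.
apply: ler_wpM2r; first exact: nrm_ge0.
by rewrite [leRHS]mx_normrE; apply/bigmax_geP; right; exists (0, j).
Qed.

Lemma contR_on_continuous (A : set 'rV[R]_n) f :
  contR_on P A f -> {within A, continuous f}.
Proof.
move=> hf; have [C C0 hC] := nrm_le_mxnorm.
apply: within_continuous_eps => x Ax e /(hf x Ax)[d [d0 hd]].
have C1 : 0 < C + 1 by rewrite ltr_wpDl.
exists (d / (C + 1)) => [|y Ay]; first by rewrite divr_gt0.
rewrite ltr_pdivlMr // => hyx; apply: hd => //.
by apply: le_lt_trans (hC _) _; have := normr_ge0 (y - x); nra.
Qed.

Lemma nrm_dist_contR_on (A : set 'rV[R]_n) z : contR_on P A (fun u => P (u - z)).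
Proof.
move=> x _ e e0; exists e; split=> // y _ hyx.
by apply: le_lt_trans (nrm_dist_dist _ _) _; rewrite opprB addrA subrK.
Qed.

Lemma closed_set_closed (X : set 'rV[R]_n) : closed_set P X -> closed X.
Proof.
move=> hX x hx; apply: hX => e e0; have [C C0 hC] := nrm_le_mxnorm.
have e1 : 0 < e / (C + 1) by rewrite divr_gt0 // ltr_wpDl.
have [y [Xy /=]] := hx _ (nbhsx_ballx x _ e1).
rewrite -ball_normE /ball_ /= distrC ltr_pdivlMr ?ltr_wpDl // => hxy.
by exists y; split => //; apply: le_lt_trans (hC _) _; have := normr_ge0 (y - x); nra.
Qed.

Lemma mxnorm_le_nrm : exists2 K, 0 < K & forall u, `|u| <= K * P u.
Proof.
pose S := [set u : 'rV[R]_n | `|u| = 1].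
have unit_normE u : u != 0 -> S (`|u|^-1 *: u).
  by move=> u0; rewrite /S /= normrZ normrV ?unitfE ?normr_eq0 // normr_id mulVf ?normr_eq0.
have [S0|S0] := pselect (S !=set0); last first.
  exists 1 => // u; have [->|u0] := eqVneq u 0; first by rewrite normr0 nrm0 mulr0.
  by exfalso; apply: S0; exists (`|u|^-1 *: u); exact: unit_normE.
have cS : compact S.
  apply: bounded_closed_compact.
    by exists 1; split=> // M M1 u; rewrite /S /= => ->; exact: ltW.
  exact: (preimage_closed (fun x _ => @norm_continuous _ _ x) (@closed_eq _ 1)).
have [c /[!inE] Sc hc] := EVT_min_rV S0 cS (contR_on_continuous (nrm_dist_contR_on (A:=S) 0)).
have c0 : c != 0 by rewrite -normr_eq0 Sc oner_eq0.
have Pc : 0 < P c by exact: nrm_gt0.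
exists (P c)^-1 => [|u]; first by rewrite invr_gt0.
have [->|u0] := eqVneq u 0; first by rewrite normr0 nrm0 mulr0.
have := hc _ (mem_set (unit_normE u u0)); rewrite !subr0 nrmZ.
rewrite normrV ?unitfE ?normr_eq0 // normr_id ler_pdivlMl ?normr_gt0 //.
by rewrite mulrC -ler_pdivlMl.
Qed.

End Norm.

Section DualNorm.
Variables (R : realType) (n : nat) (ip : 'rV[R]_n -> 'rV[R]_n -> R) (N : 'rV[R]_n -> R).
Hypothesis hip : is_inner_product ip.
Hypothesis hN : is_norm N.

Lemma enorm_le_nrm : exists2 C, 0 <= C & forall u, enorm ip u <= C * N u.
Proof.
have [CE CE0 hCE] := nrm_le_mxnorm (enorm_is_norm hip).
have [K K0 hK] := mxnorm_le_nrm hN.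
exists (CE * K) => [|u]; first by rewrite mulr_ge0 // ltW.
by apply: le_trans (hCE u) _; rewrite -mulrA ler_wpM2l.
Qed.

Lemma dual_norm_has_sup g : has_sup [set ip g x | x in [set x | N x <= 1]].
Proof.
split; first by exists (ip g 0), 0 => //=; rewrite (nrm0 hN).
have [C C0 hC] := enorm_le_nrm.
exists (enorm ip g * C) => _ [x /= Nx <-].
apply: le_trans (ip_le_enorm hip g x) _.
rewrite ler_wpM2l ?enorm_ge0 //.
by apply: le_trans (hC x) _; rewrite ler_piMr.
Qed.

Lemma dual_norm_ge0 g : 0 <= dual_norm ip N g.
Proof.
apply: (sup_upper_bound (dual_norm_has_sup g)).
by exists 0 => /=; [rewrite (nrm0 hN)|rewrite (ip0r hip)].
Qed.

Lemma ip_le_dual_norm g u : ip g u <= dual_norm ip N g * N u.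
Proof.
have [->|u0] := eqVneq u 0; first by rewrite (ip0r hip) (nrm0 hN) mulr0.
have Nu := nrm_gt0 hN u0.
rewrite -ler_pdivrMr // mulrC -(ipZr hip).
apply: (sup_upper_bound (dual_norm_has_sup g)).
exists ((N u)^-1 *: u) => //=.
by rewrite (nrmZ hN) gtr0_norm ?invr_gt0 // mulVf ?gt_eqF.
Qed.

End DualNorm.

Section RealFieldFacts.
Variable R : realFieldType.
Implicit Types a b c d e t : R.

Lemma small_step d c : 0 < d -> 0 <= c -> exists t, [/\ 0 < t, t <= 1 & t * c < d].
Proof.
move=> d0 c0; exists (Num.min 1 (d / (c + 1))); split.
- by rewrite lt_min ltr01 divr_gt0 // ltr_wpDl.
- by rewrite ge_min lexx.
- have c1 : 0 < c + 1 by rewrite ltr_wpDl.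
  apply: le_lt_trans (ler_wpM2r c0 (_ : _ <= d / (c + 1))) _; first by rewrite ge_min lexx orbT.
  by rewrite mulrAC ltr_pdivrMr // ltr_pM2l // ltrDl.
Qed.

Lemma ge0_from_right a b : (forall t, 0 < t -> t <= 1 -> 0 <= a + t * b) -> 0 <= a.
Proof.
move=> h; apply/ler_addgt0Pr => e e0.
have [t [t0 t1 tb]] := small_step e0 (addr_ge0 (normr_ge0 b) ler01).
rewrite mulrDr mulr1 in tb.
have := h t t0 t1; have := ler_wpM2l (ltW t0) (ler_norm b); lra.
Qed.

Lemma ge0_from_eps a c : (forall e, 0 < e -> - (e * c) <= a) -> 0 <= a.
Proof. by move=> h; apply: (@ge0_from_right _ c) => t t0 _; rewrite -lerBlDr sub0r h. Qed.

Lemma le_of_sqr_le_affine a b M e r : 0 <= a -> 0 <= b -> 0 < e ->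
  a + b * e < M * e ^+ 2 -> M * r ^+ 2 <= a + b * r -> r <= e.
Proof.
move=> a0 b0 e0 hM hr; rewrite leNgt; apply/negP => er.
have r0 : 0 < r := lt_trans e0 er.
have M0 : 0 < M.
  have : 0 < M * e ^+ 2 by apply: le_lt_trans hM; rewrite addr_ge0 ?mulr_ge0 // ltW.
  by rewrite pmulr_lgt0 // exprn_gt0.
have h1 : (a + b * e) * r < M * e ^+ 2 * r by rewrite ltr_pM2r.
have h2 : M * r ^+ 2 * e <= (a + b * r) * e by rewrite ler_pM2r.
have h3 : 0 < M * e * r * (r - e) by rewrite !mulr_gt0 // subr_gt0.
nra.
Qed.

Lemma young_lower a g d r : 0 < a ->
  - (g ^+ 2 / (2 * a)) * d ^+ 2 <= a / 2 * r ^+ 2 - g * (d * r).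
Proof.
move=> a0; rewrite -subr_ge0.
have -> : a / 2 * r ^+ 2 - g * (d * r) - - (g ^+ 2 / (2 * a)) * d ^+ 2
   = (a * r - g * d) ^+ 2 / (2 * a) by field; rewrite gt_eqF.
by rewrite divr_ge0 ?sqr_ge0 // mulr_ge0 // ltW.
Qed.

End RealFieldFacts.

Lemma le_from_sub_invn (R : archiFieldType) (x y c : R) :
  (forall m : nat, (0 < m)%N -> y - c / m%:R <= x) -> y <= x.
Proof.
move=> h; rewrite -subr_ge0; apply: (@ge0_from_eps _ _ 1) => e e0.
have cm : `|c| / e < (Num.truncn (`|c| / e)).+1%:R := truncnS_gt _.
have := h _ (ltn0Sn (Num.truncn (`|c| / e))).
set m := (Num.truncn _).+1%:R in cm *.
have m0 : 0 < m by rewrite ltr0n.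
have cme : `|c| / m <= e by rewrite ler_pdivrMr // mulrC -ler_pdivrMr // ltW.
have : c / m <= e by apply: le_trans cme; rewrite ler_pM2r ?invr_gt0 // ler_norm.
rewrite mulr1; clearbody m; lra.
Qed.

Lemma holder_penalty_le (R : realType) (a L nu g r D V : R) : 0 < a -> 0 <= L -> 0 <= nu ->
  0 <= D -> 0 <= r -> 0 <= V -> D <= L * r `^ nu -> r ^+ 2 <= 2 / a * V ->
  g ^+ 2 / (2 * a) * D ^+ 2 <= 2 `^ (nu - 1) * L ^+ 2 * g ^+ 2 * a `^ (- (1 + nu)) * V `^ nu.
Proof.
move=> a0 L0 nu0 D0 r0 V0 hD hr.
have pw : (r `^ nu) ^+ 2 = (r ^+ 2) `^ nu.
  by rewrite -powR_mulrn ?powR_ge0 // -powRrM mulrC powRrM powR_mulrn.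
have hD2 : D ^+ 2 <= L ^+ 2 * (r ^+ 2) `^ nu.
  by rewrite -pw -exprMn lerXn2r ?nnegrE ?mulr_ge0 ?powR_ge0.
have hrV : (r ^+ 2) `^ nu <= 2 `^ nu / a `^ nu * V `^ nu.
  have <- : (2 / a * V) `^ nu = 2 `^ nu / a `^ nu * V `^ nu.
    have a0' : 0 <= a^-1 by rewrite invr_ge0 ltW.
    rewrite (powRM _ (mulr_ge0 _ a0') V0) // (powRM _ _ a0') //.
    by rewrite -powR_inv1 ?ltW // -powRrM mulN1r powRN.
  apply: (ge0_ler_powR nu0); rewrite ?nnegrE ?sqr_ge0 //.
  by rewrite mulr_ge0 // divr_ge0 // ltW.
have -> : 2 `^ (nu - 1) * L ^+ 2 * g ^+ 2 * a `^ (- (1 + nu)) * V `^ nu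
    = g ^+ 2 / (2 * a) * (L ^+ 2 * (2 `^ nu / a `^ nu * V `^ nu)).
  rewrite powRB ?pnatr_eq0 ?implybT // powRr1 ?ler0n // powRN.
  rewrite powRD ?(gt_eqF a0) ?implybT // powRr1 ?ltW //.
  by field; rewrite !gt_eqF ?powR_gt0.
apply: ler_wpM2l; first by rewrite divr_ge0 ?sqr_ge0 // mulr_ge0 // ltW.
by apply: le_trans hD2 _; apply: ler_wpM2l; rewrite ?sqr_ge0.
Qed.


Lemma convex_combE (R : pzRingType) (V : lmodType R) (t : R) (a b : V) :
  t *: b + (1 - t) *: a = a + t *: (b - a).
Proof. by rewrite scalerBl scale1r scalerBr addrCA. Qed.

Lemma segmentBl (R : pzRingType) (V : lmodType R) (t : R) (a b : V) :
  a + t *: (b - a) - a = t *: (b - a).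
Proof. by rewrite addrC addKr. Qed.

Section DistanceGeneratingFunction.
Variables (R : realType) (n : nat) (ip : 'rV[R]_n -> 'rV[R]_n -> R)
  (N : 'rV[R]_n -> R) (X : set 'rV[R]_n) (alpha : R)
  (w : 'rV[R]_n -> R) (gw : 'rV[R]_n -> 'rV[R]_n).
Hypothesis hip : is_inner_product ip.
Hypothesis hN : is_norm N.
Hypothesis hdgf : dgf ip N X alpha w gw.
Local Notation XO := (Xo ip X w).

Let alpha_gt0 : 0 < alpha. Proof. by case: hdgf. Qed.
Let w_convex : convex_fun X w. Proof. by case: hdgf => _ []. Qed.
Let XO_convex : convex_in XO. Proof. by case: hdgf => _ [_ [_ []]]. Qed.
Let w_grad : grad_on ip N XO w gw. Proof. by case: hdgf => _ [_ [_ [_ [_ []]]]]. Qed.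
Let gw_strong_mono x x' : XO x -> XO x' ->
  alpha * N (x' - x) ^+ 2 <= ip (gw x' - gw x) (x' - x).
Proof. by case: hdgf => _ [_ [_ [_ [_ [_]]]]]; apply. Qed.

Lemma Xo_segment a b t : XO a -> XO b -> 0 <= t <= 1 -> XO (a + t *: (b - a)).
Proof. by move=> ha hb ht; rewrite -convex_combE; apply: XO_convex. Qed.

Lemma nrm_segment a b t : 0 <= t -> N (a + t *: (b - a) - a) = t * N (b - a).
Proof. by move=> t0; rewrite segmentBl (nrmZ hN) ger0_norm. Qed.

Lemma grad_approx p z e : XO p -> XO z -> 0 < e -> exists t, [/\ 0 < t, t <= 1 &
  `|w (p + t *: (z - p)) - w p - t * ip (gw p) (z - p)| <= t * (e * N (z - p))].
Proof.
move=> hp hz e0; have [d [d0 hd]] := w_grad hp e0.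
have [t [t0 t1 htd]] := small_step d0 (nrm_ge0 hN (z - p)).
have hy : XO (p + t *: (z - p)) by apply: Xo_segment; rewrite ?(ltW t0) ?t1.
exists t; split => //; move: (hd _ hy); rewrite nrm_segment ?(ltW t0) // => /(_ htd).
by rewrite segmentBl (ipZr hip) mulrCA.
Qed.

Lemma grad_ineq a b : XO a -> XO b -> w a + ip (gw a) (b - a) <= w b.
Proof.
move=> ha hb; rewrite -subr_ge0; apply: (@ge0_from_eps _ _ (N (b - a))) => e e0.
have [t [t0 t1]] := grad_approx ha hb e0; rewrite ler_norml => /andP[ht _].
have := w_convex hb.1 ha.1 (t := t); rewrite convex_combE ltW //= t1 => /(_ isT) hc.
suff : t * - (e * N (b - a)) <= t * (w b - (w a + ip (gw a) (b - a))) by rewrite ler_pM2l.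
nra.
Qed.

Lemma ip_grad_subgrad_ge0_Xo p g z : subgrad ip X w p g -> XO p -> XO z ->
  0 <= ip (gw p - g) (z - p).
Proof.
move=> hg hp hz; apply: (@ge0_from_eps _ _ (N (z - p))) => e e0.
have [t [t0 t1]] := grad_approx hp hz e0; rewrite ler_norml => /andP[_ ht].
have := hg _ (Xo_segment hp hz (t := t) _).1; rewrite ltW //= t1 segmentBl (ipZr hip).
move=> /(_ isT) hgt.
suff : t * - (e * N (z - p)) <= t * ip (gw p - g) (z - p) by rewrite ler_pM2l.
rewrite (ipBl hip); nra.
Qed.

Lemma grad_mono_segment a b t : XO a -> XO b -> 0 <= t <= 1 ->
  alpha * t * N (b - a) ^+ 2 <= ip (gw (a + t *: (b - a)) - gw a) (b - a).
Proof.
move=> ha hb /[dup] ht /andP[t0 _].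
have [->|tn0] := eqVneq t 0; first by rewrite scale0r addr0 subrr (ip0l hip) mulr0 mul0r.
have tp : 0 < t by rewrite lt0r tn0.
have := gw_strong_mono ha (Xo_segment ha hb ht).
rewrite nrm_segment // segmentBl (ipZr hip) => h; rewrite -(ler_pM2l tp).
by apply: le_trans h; rewrite le_eqVlt; apply/orP; left; apply/eqP; ring.
Qed.

(* A Riemann sum for the integral of the strong monotonicity of gw along [a, b]. *)
Lemma w_segment_lower a b (m i : nat) : XO a -> XO b -> (0 < m)%N -> (i <= m)%N ->
  i%:R / m%:R * ip (gw a) (b - a)
    + alpha * N (b - a) ^+ 2 * (i%:R * (i%:R - 1)) / (2 * m%:R ^+ 2)
  <= w (a + (i%:R / m%:R) *: (b - a)) - w a.
Proof.
move=> ha hb m0; set d := b - a; set G := ip (gw a) d; set Nd := N d.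
have mR : 0 < (m%:R : R) by rewrite ltr0n.
have t01 k : (k <= m)%N -> 0 <= (k%:R / m%:R : R) <= 1.
  by move=> km; rewrite divr_ge0 ?ler0n ?ler_pdivrMr // ?mul1r ?ler_nat // ltW.
elim: i => [|i IH] im; first by rewrite !(mul0r, mulr0) scale0r !addr0 subrr.
have im' : (i <= m)%N by exact: ltnW.
have hpt := Xo_segment ha hb (t01 _ im').
have step := grad_ineq hpt (Xo_segment ha hb (t01 _ im)).
have mono := grad_mono_segment ha hb (t01 _ im').
have dpt : a + (i.+1%:R / m%:R) *: d - (a + (i%:R / m%:R) *: d) = m%:R^-1 *: d.
  by rewrite opprD addrACA subrr add0r -scalerBl -mulrBl -natrB // subSnn mul1r.
rewrite -/d dpt (ipZr hip) in step; rewrite -/d (ipBl hip) -/G in mono.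
have {IH} := IH im'.
rewrite [i.+1%:R]mulrSr in step *.
set s := (i%:R : R) in step mono *; set u := (m%:R : R) in step mono *.
set Q := ip (gw _) d in step mono.
have mono' : alpha * (s / u) * Nd ^+ 2 / u <= (Q - G) / u.
  by rewrite ler_pM2r ?invr_gt0.
have -> : (s + 1) / u * G + alpha * Nd ^+ 2 * ((s + 1) * (s + 1 - 1)) / (2 * u ^+ 2)
  = s / u * G + alpha * Nd ^+ 2 * (s * (s - 1)) / (2 * u ^+ 2)
    + G / u + alpha * (s / u) * Nd ^+ 2 / u.
  by field; rewrite gt_eqF.
rewrite mulrBl [u^-1 * _]mulrC in mono' step *; lra.
Qed.

Lemma Breg_strong a b : XO a -> XO b -> alpha / 2 * N (b - a) ^+ 2 <= Breg ip w gw a b.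
Proof.
move=> ha hb; apply: (@le_from_sub_invn _ _ _ (alpha / 2 * N (b - a) ^+ 2)) => m m0.
have := w_segment_lower ha hb m0 (leqnn m).
have mR : 0 < (m%:R : R) by rewrite ltr0n.
rewrite divff ?gt_eqF // mul1r scale1r (addrC a (b - a)) subrK /Breg.
have -> : alpha * N (b - a) ^+ 2 * (m%:R * (m%:R - 1)) / (2 * m%:R ^+ 2)
  = alpha / 2 * N (b - a) ^+ 2 - alpha / 2 * N (b - a) ^+ 2 / m%:R.
  by field; rewrite gt_eqF.
lra.
Qed.

Lemma nrm_sqr_le_Breg a b : XO a -> XO b -> N (a - b) ^+ 2 <= 2 / alpha * Breg ip w gw a b.
Proof.
move=> ha hb; rewrite -(ler_pM2l (_ : 0 < alpha / 2)) ?divr_gt0 //.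
have -> : alpha / 2 * (2 / alpha * Breg ip w gw a b) = Breg ip w gw a b.
  by field; rewrite gt_eqF.
by rewrite (nrm_distC hN); exact: Breg_strong.
Qed.

Lemma Breg_ge0 a b : XO a -> XO b -> 0 <= Breg ip w gw a b.
Proof.
move=> ha hb; apply: le_trans (Breg_strong ha hb).
by rewrite mulr_ge0 ?sqr_ge0 // divr_ge0 // ltW.
Qed.

End DistanceGeneratingFunction.

Section PenalizedMinimizer.
Variables (R : realType) (n : nat) (ip : 'rV[R]_n -> 'rV[R]_n -> R)
  (N : 'rV[R]_n -> R) (X : set 'rV[R]_n) (w : 'rV[R]_n -> R).
Hypothesis hip : is_inner_product ip.
Hypothesis hN : is_norm N.
Hypothesis hcl : closed_set N X.
Hypothesis hwc : contR_on N X w.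
Variables (p g z : 'rV[R]_n) (M : R).
Hypothesis hg : subgrad ip X w p g.
Hypothesis Xz : X z.
Hypothesis M0 : 0 < M.

Let Phi u := w u + M * enorm ip (u - z) ^+ 2.

Lemma penalized_sublevel_bounded :
  exists B, forall u, X u -> Phi u <= w z -> `|u| <= B.
Proof.
have [K K0 hK] := mxnorm_le_nrm (enorm_is_norm hip).
set G := enorm ip g; set A := `|w z - w p| + G * enorm ip (z - p).
have G0 : 0 <= G := enorm_ge0 ip g.
have A0 : 0 <= A by rewrite addr_ge0 // mulr_ge0 // enorm_ge0.
set e := 1 + (A + G) / M.
have e1 : 1 <= e by rewrite /e lerDl; apply: divr_ge0; [exact: addr_ge0 | exact: ltW].
have he : A + G * e < M * e ^+ 2.
  have -> : M * e ^+ 2 = (M + A + G) * e by rewrite /e; field; rewrite gt_eqF.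
  have : A <= A * e by rewrite ler_peMr.
  have : 0 < M * e by rewrite mulr_gt0 // (lt_le_trans ltr01 e1).
  rewrite !mulrDl; lra.
exists (K * e + `|z|); move=> u Xu hu.
have hr : enorm ip (u - z) <= e.
  apply: (le_of_sqr_le_affine A0 G0 (lt_le_trans ltr01 e1) he).
  have := hg Xu; have := ip_ge_Nenorm hip g (u - p); have := ler_norm (w z - w p).
  have := enorm_triangle hip (u - z) (z - p); rewrite addrA subrK => htri.
  have := ler_wpM2l G0 htri; move: hu; rewrite /Phi /A mulrDr -/G; lra.
rewrite -[u](subrK z); apply: le_trans (ler_normD _ _) _.
by rewrite lerD2r; apply: le_trans (hK _) _; rewrite ler_wpM2l // ltW.
Qed.

Lemma penalized_minimizer_exists :
  exists2 m, X m & forall u, X u -> Phi m <= Phi u.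
Proof.
have [B hB] := penalized_sublevel_bounded.
have Phiz : Phi z = w z.
  by rewrite /Phi subrr (nrm0 (enorm_is_norm hip)) expr0n /= mulr0 addr0.
pose K := X `&` [set u | `|u| <= B].
have zK : K z by split => //; apply: hB => //; rewrite Phiz.
have cK : compact K.
  apply: bounded_closed_compact.
    exists B; split => [|b hb u [_ hu]]; first exact: num_real.
    exact: ltW (le_lt_trans hu hb).
  apply: closedI; first exact: (closed_set_closed hN hcl).
  exact: (preimage_closed (fun x _ => @norm_continuous _ _ x) (@closed_le R B)).
have cPhi : {within K, continuous Phi}.
  apply: within_continuousD.
    apply: (@continuous_subspaceW _ _ K X); first by move=> u [].
    exact: (contR_on_continuous hN hwc).
  apply: (@within_continuous_comp _ _ _ K (fun u => enorm ip (u - z)) (fun r => M * r ^+ 2)).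
    move=> r _; exact: (continuousM (@cst_continuous _ _ M r) (@exprn_continuous R 2 r)).
  exact: (contR_on_continuous (enorm_is_norm hip) (nrm_dist_contR_on (enorm_is_norm hip) (A:=K) z)).
have [m /[!inE] Km hm] := EVT_min_rV (ex_intro _ z zK) cK cPhi.
exists m => [|u Xu]; first by case: Km.
have [hu|hu] := leP (Phi u) (w z).
  by apply: hm; rewrite inE; split => //; exact: hB.
by apply: le_trans (hm _ (mem_set zK)) _; rewrite Phiz ltW.
Qed.

End PenalizedMinimizer.

Section ProxMapping.
Variables (R : realType) (n : nat) (ip : 'rV[R]_n -> 'rV[R]_n -> R)
  (N : 'rV[R]_n -> R) (X : set 'rV[R]_n) (alpha : R)
  (w : 'rV[R]_n -> R) (gw : 'rV[R]_n -> 'rV[R]_n).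
Hypothesis hip : is_inner_product ip.
Hypothesis hN : is_norm N.
Hypothesis hXc : convex_in X.
Hypothesis hcl : closed_set N X.
Hypothesis hdgf : dgf ip N X alpha w gw.

Let w_convex : convex_fun X w. Proof. by case: hdgf => _ []. Qed.
Let w_cont : contR_on N X w. Proof. by case: hdgf => _ [_ []]. Qed.

Lemma penalized_minimizer_subgrad m z M : 0 < M -> X m ->
  (forall u, X u -> w m + M * enorm ip (m - z) ^+ 2 <= w u + M * enorm ip (u - z) ^+ 2) ->
  subgrad ip X w m ((2 * M) *: (z - m)).
Proof.
move=> M0 Xm hm u Xu.
set a := ip (m - z) (u - m); set q := enorm ip (u - m) ^+ 2.
suff : 0 <= w u - w m + 2 * M * a.
  have ha : ip (z - m) (u - m) = - a by rewrite /a -(ipNl hip) opprB.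
  by rewrite (ipZl hip) ha; lra.
apply: (@ge0_from_right _ _ (M * q)) => t t0 t1.
have ht : 0 <= t <= 1 by rewrite ltW.
have := hm _ (hXc Xu Xm ht); rewrite convex_combE addrAC (enorm_sqrDZ hip) -/a -/q => h.
have := w_convex Xu Xm ht; rewrite convex_combE => hc.
have : 0 <= t * (w u - w m + 2 * M * a + t * (M * q)) by nra.
by rewrite pmulr_rge0.
Qed.

(* For z outside X^o, z is approximated by the minimiser of
   w + M * enorm (. - z) ^+ 2 over X, which has a subgradient and hence lies
   in X^o. *)
Lemma ip_grad_subgrad_ge0 p g z : subgrad ip X w p g -> Xo ip X w p -> X z ->
  0 <= ip (gw p - g) (z - p).
Proof.
move=> hg hp Xz; set a := gw p - g.
apply: (@ge0_from_eps _ _ (enorm ip a)) => e e0.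
set Aq := w z - w p - ip g (z - p); set G := enorm ip g.
have Aq0 : 0 <= Aq by have := hg _ Xz; rewrite /Aq; lra.
set M := (Aq + G * e + 1) / e ^+ 2.
have hM : M * e ^+ 2 = Aq + G * e + 1 by rewrite divfK // expf_neq0 // gt_eqF.
have M0 : 0 < M.
  have : 0 < M * e ^+ 2 by rewrite hM ltr_wpDl // addr_ge0 // mulr_ge0 ?enorm_ge0 // ltW.
  by rewrite pmulr_lgt0 // exprn_gt0.
have [m Xm hm] := penalized_minimizer_exists hip hN hcl w_cont hg Xz M0.
have hsg := penalized_minimizer_subgrad M0 Xm hm.
have mXo : Xo ip X w m by split => //; exists ((2 * M) *: (z - m)).
have hpm := ip_grad_subgrad_ge0_Xo hip hN hdgf hg hp mXo.
have hr : enorm ip (m - z) <= e.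
  apply: (le_of_sqr_le_affine (M := M) Aq0 (enorm_ge0 ip g) e0); first by rewrite hM ltrDl.
  have := hm _ Xz; rewrite subrr (nrm0 (enorm_is_norm hip)) expr0n /= mulr0 addr0.
  have := hg _ Xm; have := ip_ge_Nenorm hip g (m - z).
  have -> : m - p = (z - p) + (m - z) by rewrite [RHS]addrC addrA subrK.
  rewrite (ipDr hip (z - p)) /Aq -/G; lra.
have -> : z - p = (m - p) + (z - m) by rewrite [RHS]addrC addrA subrK.
rewrite (ipDr hip (m - p)); have := ip_ge_Nenorm hip a (z - m).
rewrite (nrm_distC (enorm_is_norm hip) z m).
have := ler_wpM2l (enorm_ge0 ip a) hr; move: hpm; rewrite -/a; nra.
Qed.

Lemma prox_subgrad x phi p : is_prox ip X w gw x phi p -> subgrad ip X w p (gw x - phi).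
Proof.
move=> [Xp hp] u Xu; have := hp _ Xu; rewrite /Breg.
by rewrite !(ipBl hip) !(ipBr hip) => h; lra.
Qed.

Lemma prox_Xo x phi p : is_prox ip X w gw x phi p -> Xo ip X w p.
Proof. by move=> hp; split; [case: hp | exists (gw x - phi); exact: prox_subgrad]. Qed.

Lemma prox_three_point x phi p z : is_prox ip X w gw x phi p -> X z ->
  ip phi (p - z) <= Breg ip w gw x z - Breg ip w gw p z - Breg ip w gw x p.
Proof.
move=> hp Xz; have := ip_grad_subgrad_ge0 (prox_subgrad hp) (prox_Xo hp) Xz.
by rewrite /Breg !(ipBl hip) !(ipBr hip) => h; lra.
Qed.

End ProxMapping.

Section ExtragradientStep.
Variables (R : realType) (n : nat) (ip : 'rV[R]_n -> 'rV[R]_n -> R)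
  (N : 'rV[R]_n -> R) (X : set 'rV[R]_n) (F : 'rV[R]_n -> 'rV[R]_n)
  (alpha : R) (w : 'rV[R]_n -> R) (gw : 'rV[R]_n -> 'rV[R]_n)
  (xk yk xk1 xs : 'rV[R]_n) (gam : R).
Hypothesis hip : is_inner_product ip.
Hypothesis hN : is_norm N.
Hypothesis hXc : convex_in X.
Hypothesis hcl : closed_set N X.
Hypothesis hdgf : dgf ip N X alpha w gw.
Hypothesis Xxs : X xs.
Hypothesis hmono : forall z, X z -> 0 <= ip (F z) (z - xs).
Hypothesis hxk : Xo ip X w xk.
Hypothesis gam0 : 0 < gam.
Hypothesis hyk : is_prox ip X w gw xk (gam *: F xk) yk.
Hypothesis hxk1 : is_prox ip X w gw xk (gam *: F yk) xk1.

Local Notation V := (Breg ip w gw).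
Local Notation D := (dual_norm ip N (F xk - F yk)).

Let alpha_gt0 : 0 < alpha. Proof. by case: hdgf. Qed.
Let ykXo : Xo ip X w yk. Proof. exact: (prox_Xo hip hyk). Qed.

Lemma extragradient_step_ineq :
  V xk yk + alpha / 2 * N (xk1 - yk) ^+ 2 - gam * (D * N (xk1 - yk))
  <= V xk xs - V xk1 xs.
Proof.
have xk1Xo := prox_Xo hip hxk1.
have tp_xk1 := prox_three_point hip hN hXc hcl hdgf hxk1 Xxs.
have tp_yk := prox_three_point hip hN hXc hcl hdgf hyk xk1Xo.1.
have strong_yk := Breg_strong hip hN hdgf ykXo xk1Xo.
have dual_bound := ip_le_dual_norm hip hN (F xk - F yk) (xk1 - yk).
rewrite (ipZl hip) -[xk1 - xs](subrKA yk) (ipDr hip) in tp_xk1.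
rewrite (ipZl hip) -opprB (ipNr hip) in tp_yk.
rewrite (ipBl hip) -(ler_pM2l gam0) in dual_bound.
have := mulr_ge0 (ltW gam0) (hmono ykXo.1); lra.
Qed.

Lemma extragradient_descent :
  - (gam ^+ 2 / (2 * alpha)) * D ^+ 2 + V xk yk <= V xk xs - V xk1 xs.
Proof.
have := extragradient_step_ineq; have := young_lower gam D (N (xk1 - yk)) alpha_gt0.
lra.
Qed.

Lemma extragradient_descent_holder L nu : 0 < L -> 0 < nu <= 1 ->
  (forall u v, X u -> X v -> dual_norm ip N (F u - F v) <= L * N (u - v) `^ nu) ->
  V xk yk - 2 `^ (nu - 1) * L ^+ 2 * gam ^+ 2 * alpha `^ (- (1 + nu)) * V xk yk `^ nu
  <= V xk xs - V xk1 xs.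
Proof.
move=> L0 /andP[nu0 _] hL.
have := holder_penalty_le gam alpha_gt0 (ltW L0) (ltW nu0) (dual_norm_ge0 hip hN _)
  (nrm_ge0 hN (xk - yk)) (Breg_ge0 hip hN hdgf hxk ykXo) (hL _ _ hxk.1 ykXo.1)
  (nrm_sqr_le_Breg hip hN hdgf hxk ykXo).
have := extragradient_descent; lra.
Qed.

Lemma extragradient_descent_lipschitz L : 0 < L ->
  (forall u v, X u -> X v -> dual_norm ip N (F u - F v) <= L * N (u - v)) ->
  (1 - L ^+ 2 * gam ^+ 2 / alpha ^+ 2) * V xk yk <= V xk xs - V xk1 xs.
Proof.
move=> L0 hL.
have h01 : ((0 : R) < 1) && ((1 : R) <= 1) by rewrite ltr01 lexx.
have hL1 u v : X u -> X v -> dual_norm ip N (F u - F v) <= L * N (u - v) `^ 1.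
  by move=> Xu Xv; rewrite powRr1 ?(nrm_ge0 hN) ?hL.
have := extragradient_descent_holder L0 h01 hL1.
have a2 : alpha `^ (- (1 + 1)) = alpha ^- 2.
  by rewrite powRN -mulr2n powR_mulrn // ltW.
rewrite subrr powRr0 powRr1 ?(Breg_ge0 hip hN hdgf hxk ykXo) // a2 mul1r.
by rewrite mulrBl mul1r mulrAC.
Qed.

End ExtragradientStep.

Unset Implicit Arguments. Set Strict Implicit.

Theorem lemma5 (R : realType) (n : nat) (ip : 'rV[R]_n -> 'rV[R]_n -> R)
  (N : 'rV[R]_n -> R) (X : set 'rV[R]_n) (F : 'rV[R]_n -> 'rV[R]_n)
  (alpha : R) (w : 'rV[R]_n -> R) (gw : 'rV[R]_n -> 'rV[R]_n)
  (x y : nat -> 'rV[R]_n) (gamma : nat -> R) :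
  is_inner_product ip -> is_norm N ->
  convex_in X -> closed_set N X -> cont_on N X F ->
  (exists xs, vi_sol ip X F xs) ->
  (forall xs, vi_sol ip X F xs -> forall z, X z -> 0 <= ip (F z) (z - xs)) ->
  dgf ip N X alpha w gw ->
  Xo ip X w (x 1%N) ->
  (forall k, (0 < k)%N -> 0 < gamma k) ->
  (forall k, (0 < k)%N -> is_prox ip X w gw (x k) (gamma k *: F (x k)) (y k)) ->
  (forall k, (0 < k)%N -> is_prox ip X w gw (x k) (gamma k *: F (y k)) (x k.+1)) ->
  (* (a) *)
  (exists xs, vi_sol ip X F xs /\ forall k, (0 < k)%N ->
     - (gamma k ^+ 2 / (2 * alpha)) * dual_norm ip N (F (x k) - F (y k)) ^+ 2
       + Breg ip w gw (x k) (y k)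
     <= Breg ip w gw (x k) xs - Breg ip w gw (x k.+1) xs)
  /\
  (* (b) Hoelder continuous F *)
  (forall (L nu : R), 0 < L -> 0 < nu <= 1 ->
     (forall u v, X u -> X v -> dual_norm ip N (F u - F v) <= L * N (u - v) `^ nu) ->
     exists xs, vi_sol ip X F xs /\ forall k, (0 < k)%N ->
       Breg ip w gw (x k) (y k)
       - 2 `^ (nu - 1) * L ^+ 2 * gamma k ^+ 2 * alpha `^ (- (1 + nu))
         * Breg ip w gw (x k) (y k) `^ nu
       <= Breg ip w gw (x k) xs - Breg ip w gw (x k.+1) xs)
  /\
  (* (b), Lipschitz case nu = 1 *)
  (forall L : R, 0 < L ->
     (forall u v, X u -> X v -> dual_norm ip N (F u - F v) <= L * N (u - v)) ->
     exists xs, vi_sol ip X F xs /\ forall k, (0 < k)%N ->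
       (1 - L ^+ 2 * gamma k ^+ 2 / alpha ^+ 2) * Breg ip w gw (x k) (y k)
       <= Breg ip w gw (x k) xs - Breg ip w gw (x k.+1) xs).
Proof.
move=> hip hN hXc hcl _ [xs hxs] hmono hdgf hx1 hgam hpy hpx.
have xkXo k : (0 < k)%N -> Xo ip X w (x k).
  by case: k => [//|[_|k _]]; [exact: hx1 | exact: (prox_Xo hip (hpx k.+1 isT))].
split; [|split].
- exists xs; split => // k k0.
  exact: extragradient_descent hip hN hXc hcl hdgf hxs.1 (hmono xs hxs)
    (hgam k k0) (hpy k k0) (hpx k k0).
- move=> L nu L0 hnu hL; exists xs; split => // k k0.
  exact: extragradient_descent_holder hip hN hXc hcl hdgf hxs.1 (hmono xs hxs) (xkXo k k0)
    (hgam k k0) (hpy k k0) (hpx k k0) L nu L0 hnu hL.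
- move=> L L0 hL; exists xs; split => // k k0.
  exact: extragradient_descent_lipschitz hip hN hXc hcl hdgf hxs.1 (hmono xs hxs) (xkXo k k0)
    (hgam k k0) (hpy k k0) (hpx k k0) L L0 hL.
Qed.
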